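(* Let $g$ be a non-constant entire function of finite order $\rho\ge0$ whose Taylor coefficients are all non-negative, and let $f=e^g$. Let $(X_t)_{t\ge0}$ be the Khinchin family of $f$ and $\breve{X}_t$ its normalization, and let $Z$ be a standard normal random variable. Then $$\lim_{t\to\infty}\mathbf{E}(\breve{X}_t^m)=\mathbf{E}(Z^m)\quad\text{for every integer } m\ge1.$$
   Context: Such $f=\sum_n a_nz^n$ is entire, with $a_n\ge0$ and $a_0=e^{g(0)}>0$. For $t>0$, $X_t$ is the random variable with $\mathbf{P}(X_t=n)=a_nt^n/f(t)$, $n\ge0$. With $m_f(t)=\mathbf{E}(X_t)$ and $\sigma_f^2(t)=\mathbf{V}(X_t)>0$, the normalization is $\breve{X}_t=(X_t-m_f(t))/\sigma_f(t)$. The order of an entire function $g$ is $\limsup_{r\to\infty}\frac{\ln\ln\max_{|z|=r}|g(z)|}{\ln r}$. *)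

From Stdlib Require Import Reals.
From Coquelicot Require Import Coquelicot.
Open Scope R_scope.

(** The entire function g with (real) Taylor coefficients [b], evaluated at a
    complex point: [is_pseries (fun n => RtoC (b n)) z l] means g(z) = l. *)

Definition max_modulus (b : nat -> R) (r : R) : R :=
  real (Lub_Rbar (fun y => exists (z : C) (l : C),
          Cmod z = r /\ is_pseries (fun n => RtoC (b n)) z l /\ y = Cmod l)).

(** g has finite order: limsup_{r->oo} ln ln M_g(r) / ln r < +oo,
    i.e. ln ln M_g(r) / ln r is eventually bounded above. *)
Definition finite_order (b : nat -> R) : Prop :=
  exists (K R0 : R), 0 < R0 /\ forall r, R0 <= r ->
    ln (ln (max_modulus b r)) / ln r <= K.

Definition khinchin_pmf (a : nat -> R) (t : R) (n : nat) : R :=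
  a n * t ^ n / PSeries a t.

Definition kmean (a : nat -> R) (t : R) : R :=
  Series (fun n => INR n * khinchin_pmf a t n).

Definition kvar (a : nat -> R) (t : R) : R :=
  Series (fun n => (INR n - kmean a t) ^ 2 * khinchin_pmf a t n).

Definition knorm_moment (a : nat -> R) (t : R) (m : nat) : R :=
  Series (fun n => ((INR n - kmean a t) / sqrt (kvar a t)) ^ m
                   * khinchin_pmf a t n).

Definition std_normal_density (x : R) : R := exp (- x ^ 2 / 2) / sqrt (2 * PI).

(* Write g(z) = Σ b_n z^n and G_j(t) = Σ n^j b_n t^n = θ^j g(t), where θ = t d/dt.
   Since f = e^g we have θ f = G_1 f, so X_t has mean G_1(t), and its central moments
   μ_k(t) = E((X_t - G_1(t))^k) satisfy μ_0 = 1, μ_1 = 0 and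
     μ_(k+1) = θ μ_k + k G_2 μ_(k-1);
   in particular σ_f^2 = G_2. As θ G_j = G_(j+1), induction on k shows that μ_k is a
   polynomial in G_2, G_3, ..., isobaric of weight k when G_j has weight j, whose
   coefficient of G_2^(k/2) obeys the recursion c_(k+2) = (k+1) c_k of the Gaussian
   moments E(Z^k). Non-negative coefficients and finite order give G_j = o(G_2^(j/2))
   for j >= 3, so every other monomial of μ_k is o(σ_f^k) and μ_k / σ_f^k -> E(Z^k). *)

From Stdlib Require Import Reals Lra Lia ZArith Classical.
From Coquelicot Require Import Coquelicot.
Open Scope R_scope.

Lemma is_derive_eq (f : R -> R) (x l l' : R) : is_derive f x l -> l = l' -> is_derive f x l'.
Proof. now intros H <-. Qed.

Lemma is_derive_Rmult (f g : R -> R) (x df dg : R) :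
  is_derive f x df -> is_derive g x dg ->
  is_derive (fun y => f y * g y) x (df * g x + f x * dg).
Proof. intros Hf Hg; apply (is_derive_mult f g x df dg Hf Hg), Rmult_comm. Qed.

Lemma locally_pos (t : R) : 0 < t -> locally t (fun s => 0 < s).
Proof.
  intro Ht; exists (mkposreal t Ht); intros s Hs.
  change (Rabs (s - t) < t) in Hs; apply Rabs_def2 in Hs; lra.
Qed.

Lemma is_lim_ext_pos (f g : R -> R) (l : Rbar) :
  is_lim f p_infty l -> (forall t, 0 < t -> f t = g t) -> is_lim g p_infty l.
Proof. intros Hf Hfg; apply (is_lim_ext_loc f); [exists 0; exact Hfg|exact Hf]. Qed.

Lemma is_derive_const_R (c x : R) : is_derive (fun _ => c) x 0.
Proof. apply (is_derive_const (K := R_AbsRing) (V := R_NormedModule)). Qed.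

(** * The Euler operator on power series *)

(* [theta_series c j] is θ^j (Σ c_n t^n), with θ = t d/dt. *)
Definition theta_series (c : nat -> R) (j : nat) (t : R) : R :=
  PSeries (fun n => INR n ^ j * c n) t.

Lemma theta_coef_S (c : nat -> R) (j n : nat) :
  INR n ^ S j * c n = PS_incr_1 (PS_derive (fun n => INR n ^ j * c n)) n.
Proof.
  destruct n as [|n]; unfold PS_derive, PS_incr_1.
  - change (0 * 0 ^ j * c 0%nat = 0); ring.
  - cbn [pow]; ring.
Qed.

Lemma CV_radius_theta (c : nat -> R) (j : nat) :
  CV_radius (fun n => INR n ^ j * c n) = CV_radius c.
Proof.
  induction j as [|j IH].
  - apply CV_radius_ext; intro n; simpl; ring.
  - rewrite (CV_radius_ext _ _ (theta_coef_S c j)), CV_radius_incr_1.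
    now rewrite CV_radius_derive.
Qed.

Lemma theta_series_0 (c : nat -> R) (t : R) : theta_series c 0 t = PSeries c t.
Proof. apply PSeries_ext; intro n; simpl; ring. Qed.

Section EntireSeries.

Variable c : nat -> R.
Hypothesis c_entire : CV_radius c = p_infty.

Lemma is_series_theta (j : nat) (t : R) :
  is_series (fun n => INR n ^ j * (c n * t ^ n)) (theta_series c j t).
Proof.
  assert (E : ex_pseries (fun n => INR n ^ j * c n) t).
  { apply CV_radius_inside. now rewrite CV_radius_theta, c_entire. }
  eapply is_series_ext; [|exact (PSeries_correct _ _ E)].
  intro n; rewrite pow_n_pow; change (t ^ n * (INR n ^ j * c n) = INR n ^ j * (c n * t ^ n)).
  ring.
Qed.

Lemma theta_series_Series (j : nat) (t : R) :
  theta_series c j t = Series (fun n => INR n ^ j * (c n * t ^ n)).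
Proof. symmetry; apply is_series_unique, is_series_theta. Qed.

Lemma ex_series_theta (j : nat) (t : R) :
  ex_series (fun n => INR n ^ j * (c n * t ^ n)).
Proof. eexists; apply is_series_theta. Qed.

Lemma is_derive_theta (j : nat) (t : R) : t <> 0 ->
  is_derive (theta_series c j) t (theta_series c (S j) t / t).
Proof.
  intro Ht.
  replace (theta_series c (S j) t / t)
    with (PSeries (PS_derive (fun n => INR n ^ j * c n)) t).
  { apply is_derive_PSeries. now rewrite CV_radius_theta, c_entire. }
  unfold theta_series. rewrite (PSeries_ext _ _ t (theta_coef_S c j)), PSeries_incr_1.
  now field.
Qed.

Lemma is_derive_PSeries_theta (t : R) : t <> 0 ->
  is_derive (PSeries c) t (theta_series c 1 t / t).
Proof.
  intro Ht; apply (is_derive_ext (theta_series c 0)); [intro; apply theta_series_0|].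
  exact (is_derive_theta 0 t Ht).
Qed.

End EntireSeries.

Lemma CV_radius_infinite (a : nat -> R) :
  (forall x, ex_pseries a x) -> CV_radius a = p_infty.
Proof.
  intro Ha.
  assert (Hbnd : forall r, exists M, forall n, Rabs (a n * r ^ n) <= M).
  { intro r. destruct (Ha r) as [l Hl].
    assert (L : is_lim_seq (fun n => a n * r ^ n) 0).
    { apply ex_series_lim_0. exists l. eapply is_series_ext; [|exact Hl].
      intro n; rewrite pow_n_pow; apply Rmult_comm. }
    destruct (filterlim_bounded (fun n => a n * r ^ n)) as [M HM]; [now exists 0|].
    now exists M. }
  destruct (CV_radius_bounded a) as [Hub _].
  destruct (CV_radius a) as [y| |]; auto; exfalso.
  - assert (H := Hub (y + 1) (Hbnd (y + 1))); simpl in H; lra.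
  - exact (Hub 0 (Hbnd 0)).
Qed.

(** * Central moments of the Khinchin family of exp g *)

Section MixedMoments.

Variable a : nat -> R.
Hypothesis a_entire : CV_radius a = p_infty.
Variable m : R -> R.

Definition mixed_term (i k : nat) (t : R) (n : nat) : R :=
  INR n ^ i * (INR n - m t) ^ k * (a n * t ^ n).

Definition mixed_moment (i k : nat) (t : R) : R := Series (mixed_term i k t).

Lemma mixed_term_S (i k : nat) (t : R) (n : nat) :
  mixed_term i (S k) t n = mixed_term (S i) k t n - m t * mixed_term i k t n.
Proof. unfold mixed_term; simpl; ring. Qed.

Lemma ex_series_mixed_term (i k : nat) (t : R) : ex_series (mixed_term i k t).
Proof.
  revert i; induction k as [|k IH]; intro i.
  - eapply ex_series_ext; [|apply (ex_series_theta a a_entire i t)].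
    intro n; unfold mixed_term; simpl; ring.
  - eapply ex_series_ext; [intro n; symmetry; apply mixed_term_S|].
    apply (ex_series_minus _ _ (IH (S i))), (ex_series_scal_l (V := R_NormedModule) _ _ (IH i)).
Qed.

Lemma mixed_moment_0 (i : nat) (t : R) : mixed_moment i 0 t = theta_series a i t.
Proof.
  apply is_series_unique.
  eapply is_series_ext; [|apply (is_series_theta a a_entire i t)].
  intro n; unfold mixed_term; simpl; ring.
Qed.

Lemma mixed_moment_S (i k : nat) (t : R) :
  mixed_moment i (S k) t = mixed_moment (S i) k t - m t * mixed_moment i k t.
Proof.
  unfold mixed_moment. rewrite (Series_ext _ _ (mixed_term_S i k t)), <- Series_scal_l.
  apply Series_minus; [|apply (ex_series_scal_l (V := R_NormedModule))];
    apply ex_series_mixed_term.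
Qed.

(* The weight n^i makes the induction on k go through:
   (n - m)^(k+1) = n (n - m)^k - m (n - m)^k. *)
Lemma is_derive_mixed_moment (i k : nat) (t m' : R) : t <> 0 -> is_derive m t m' ->
  is_derive (mixed_moment i k) t
    (- INR k * m' * mixed_moment i (pred k) t + mixed_moment (S i) k t / t).
Proof.
  intros Ht Hm; revert i; induction k as [|k IH]; intro i.
  - apply (is_derive_ext (theta_series a i)); [intro s; symmetry; apply mixed_moment_0|].
    eapply is_derive_eq; [apply (is_derive_theta a a_entire i t Ht)|].
    simpl pred; rewrite !mixed_moment_0; change (INR 0) with 0; ring.
  - apply (is_derive_ext (fun s => mixed_moment (S i) k s - m s * mixed_moment i k s));
      [intro s; symmetry; apply mixed_moment_S|].
    eapply is_derive_eq.
    { apply (is_derive_minus _ _ _ _ _ (IH (S i)) (is_derive_Rmult _ _ _ _ _ Hm (IH i))). }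
    rewrite S_INR, (mixed_moment_S (S i) k t); unfold minus, plus, opp; simpl.
    destruct k as [|k]; simpl pred.
    + simpl; field; exact Ht.
    + rewrite (mixed_moment_S i k t). field; exact Ht.
Qed.

End MixedMoments.

Section Isobaric.

Variable G : nat -> R -> R.
Hypothesis G_derive : forall j t, 0 < t -> is_derive (G j) t (G (S j) t / t).

(* [isobaric w c f]: on [t > 0], [f] is a polynomial in [G 2, G 3, ...] all of whose
   monomials have weight [w], [G j] having weight [j]; [c] is the coefficient of
   [G 2 ^ (w / 2)]. *)
Inductive isobaric : nat -> R -> (R -> R) -> Prop :=
| isobaric_const c : isobaric 0 c (fun _ => c)
| isobaric_zero w : isobaric w 0 (fun _ => 0)
| isobaric_mul_G2 w c f : isobaric w c f -> isobaric (S (S w)) c (fun t => G 2 t * f t)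
| isobaric_mul_G j w c f : (3 <= j)%nat -> isobaric w c f ->
    isobaric (j + w) 0 (fun t => G j t * f t)
| isobaric_plus w c d f g : isobaric w c f -> isobaric w d g ->
    isobaric w (c + d) (fun t => f t + g t)
| isobaric_scal w c r f : isobaric w c f -> isobaric w (r * c) (fun t => r * f t)
| isobaric_ext w c f g : isobaric w c f -> (forall t, 0 < t -> f t = g t) -> isobaric w c g.

Lemma isobaric_congr (w w' : nat) (c c' : R) (f g : R -> R) : isobaric w c f ->
  w = w' -> c = c' -> (forall t, 0 < t -> f t = g t) -> isobaric w' c' g.
Proof. intros H <- <-; apply isobaric_ext, H. Qed.

Lemma isobaric_mul_G_eq (j w w' : nat) (c : R) (f : R -> R) :
  (3 <= j)%nat -> isobaric w c f -> (j + w)%nat = w' ->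
  isobaric w' 0 (fun t => G j t * f t).
Proof. intros Hj Hf <-; exact (isobaric_mul_G j w c f Hj Hf). Qed.

Lemma isobaric_euler (w : nat) (c : R) (f : R -> R) : isobaric w c f ->
  exists f', (forall t, 0 < t -> is_derive f t (f' t)) /\
             isobaric (S w) 0 (fun t => t * f' t).
Proof.
  induction 1 as [c|w|w c f Hf [f' [Df If']]|j w c f Hj Hf [f' [Df If']]
                 |w c d f g _ [f' [Df If']] _ [g' [Dg Ig']]|w c r f _ [f' [Df If']]
                 |w c f g _ [f' [Df If']] Hfg].
  - exists (fun _ => 0); split; [intros; apply is_derive_const_R|].
    apply (isobaric_congr _ _ _ _ _ _ (isobaric_zero 1)); auto; intros; ring.
  - exists (fun _ => 0); split; [intros; apply is_derive_const_R|].
    apply (isobaric_congr _ _ _ _ _ _ (isobaric_zero (S w))); auto; intros; ring.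
  - exists (fun t => G 3 t / t * f t + G 2 t * f' t); split.
    + intros t Ht; apply is_derive_Rmult; auto.
    + apply (isobaric_congr _ _ _ _ _ _
               (isobaric_plus _ _ _ _ _ (isobaric_mul_G 3 w c f (le_n 3) Hf)
                  (isobaric_mul_G2 _ _ _ If'))); [reflexivity|ring|].
      intros t Ht; field; lra.
  - exists (fun t => G (S j) t / t * f t + G j t * f' t); split.
    + intros t Ht; apply is_derive_Rmult; auto.
    + apply (isobaric_congr _ _ _ _ _ _
               (isobaric_plus _ _ _ _ _ (isobaric_mul_G (S j) w c f ltac:(lia) Hf)
                  (isobaric_mul_G_eq j _ (S j + w) _ _ Hj If' ltac:(lia)))); [reflexivity|ring|].
      intros t Ht; field; lra.
  - exists (fun t => f' t + g' t); split.
    + intros t Ht; apply (is_derive_plus f g); auto.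
    + apply (isobaric_congr _ _ _ _ _ _ (isobaric_plus _ _ _ _ _ If' Ig')); auto; [ring|].
      intros t Ht; ring.
  - exists (fun t => r * f' t); split.
    + intros t Ht; apply is_derive_scal; auto.
    + apply (isobaric_congr _ _ _ _ _ _ (isobaric_scal _ _ r _ If')); auto; [ring|].
      intros t Ht; ring.
  - exists f'; split; auto.
    intros t Ht; apply (is_derive_ext_loc f); auto.
    apply (filter_imp _ _ (fun s Hs => Hfg s Hs)), locally_pos, Ht.
Qed.

Hypothesis G2_pos : forall t, 0 < t -> 0 < G 2 t.
Hypothesis G_ratio_vanishes :
  forall j, (3 <= j)%nat -> is_lim (fun t => G j t / sqrt (G 2 t) ^ j) p_infty 0.

Lemma isobaric_lim (w : nat) (c : R) (f : R -> R) : isobaric w c f ->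
  is_lim (fun t => f t / sqrt (G 2 t) ^ w) p_infty c.
Proof.
  assert (Hs : forall t, 0 < t -> 0 < sqrt (G 2 t)) by (intros; apply sqrt_lt_R0; auto).
  assert (Hsw : forall t w, 0 < t -> sqrt (G 2 t) ^ w <> 0)
    by (intros; apply pow_nonzero, Rgt_not_eq, Hs; auto).
  induction 1 as [c|w|w c f _ IH|j w c f Hj _ IH|w c d f g _ IH1 _ IH2|w c r f _ IH
                 |w c f g _ IH Hfg].
  - apply (is_lim_ext_pos _ _ _ (is_lim_const c p_infty)); intros; simpl; field.
  - apply (is_lim_ext_pos _ _ _ (is_lim_const 0 p_infty)); intros t Ht; simpl; field; auto.
  - apply (is_lim_ext_pos _ _ _ IH); intros t Ht; simpl.
    rewrite <- (sqrt_sqrt (G 2 t)) at 2 by (apply Rlt_le; auto).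
    field; split; auto; apply Rgt_not_eq, Hs, Ht.
  - pose proof (is_lim_mult _ _ _ _ _ (G_ratio_vanishes j Hj) IH I) as L.
    rewrite Rbar_mult_0_l in L.
    apply (is_lim_ext_pos _ _ _ L); intros t Ht; simpl.
    rewrite pow_add; field; split; auto.
  - apply (is_lim_ext_pos _ _ _ (is_lim_plus _ _ _ _ _ _ IH1 IH2 eq_refl)); intros t Ht.
    simpl; field; auto.
  - apply (is_lim_ext_pos _ _ _ (is_lim_scal_l _ r _ _ IH)); intros t Ht.
    simpl; field; auto.
  - apply (is_lim_ext_pos _ _ _ IH); intros t Ht; simpl; rewrite Hfg; auto.
Qed.

End Isobaric.

Fixpoint gauss_moment (k : nat) : R :=
  match k with
  | O => 1
  | S O => 0
  | S ((S k') as k1) => INR k1 * gauss_moment k'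
  end.

Section KhinchinExp.

Variables a b : nat -> R.
Hypothesis a_entire : CV_radius a = p_infty.
Hypothesis b_entire : CV_radius b = p_infty.
Hypothesis f_exp_g : forall t, PSeries a t = exp (PSeries b t).

Let f_pos (t : R) : 0 < PSeries a t.
Proof. rewrite f_exp_g; apply exp_pos. Qed.

Lemma theta_1_exp (t : R) : t <> 0 ->
  theta_series a 1 t = theta_series b 1 t * PSeries a t.
Proof.
  intro Ht.
  assert (Dexp : is_derive (PSeries a) t (theta_series b 1 t / t * exp (PSeries b t))).
  { apply (is_derive_ext (fun s => exp (PSeries b s))); [intro; symmetry; apply f_exp_g|].
    apply (is_derive_comp exp (PSeries b)); [apply is_derive_exp|].
    apply (is_derive_ext (theta_series b 0)); [intro; apply theta_series_0|].
    exact (is_derive_theta b b_entire 0 t Ht). }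
  pose proof (is_derive_unique _ _ _ (is_derive_PSeries_theta a a_entire t Ht)) as E.
  rewrite (is_derive_unique _ _ _ Dexp), <- f_exp_g in E.
  replace (theta_series a 1 t) with (t * (theta_series a 1 t / t)) by (field; exact Ht).
  rewrite <- E; field; exact Ht.
Qed.

(* E((X_t - m_f(t))^k); see [Series_centred_pmf] and [kmean_exp]. *)
Definition central_moment (k : nat) (t : R) : R :=
  mixed_moment a (theta_series b 1) 0 k t / PSeries a t.

Lemma central_moment_0 (t : R) : central_moment 0 t = 1.
Proof.
  unfold central_moment; rewrite mixed_moment_0, theta_series_0 by exact a_entire.
  field; apply Rgt_not_eq, f_pos.
Qed.

Lemma central_moment_1 (t : R) : t <> 0 -> central_moment 1 t = 0.
Proof.
  intro Ht; unfold central_moment.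
  rewrite mixed_moment_S, !mixed_moment_0, theta_series_0, theta_1_exp by assumption.
  field; apply Rgt_not_eq, f_pos.
Qed.

Lemma is_derive_central_moment (k : nat) (t : R) : 0 < t ->
  is_derive (central_moment k) t
    ((central_moment (S k) t - INR k * theta_series b 2 t * central_moment (pred k) t) / t).
Proof.
  intro Ht; assert (Ht0 : t <> 0) by lra.
  eapply is_derive_eq.
  { apply is_derive_div;
      [|apply (is_derive_PSeries_theta a a_entire _ Ht0)|apply Rgt_not_eq, f_pos].
    apply (is_derive_mixed_moment a a_entire); [exact Ht0|].
    exact (is_derive_theta b b_entire 1 t Ht0). }
  unfold central_moment.
  rewrite (mixed_moment_S a a_entire _ 0 k), theta_1_exp by exact Ht0.
  field; split; [apply Rgt_not_eq, f_pos|exact Ht0].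
Qed.

Lemma central_moment_2 (t : R) : 0 < t -> central_moment 2 t = theta_series b 2 t.
Proof.
  intro Ht.
  assert (D0 : is_derive (central_moment 1) t 0).
  { apply (is_derive_ext_loc (fun _ => 0)); [|apply is_derive_const_R].
    apply (filter_imp _ _ (fun s Hs => eq_sym (central_moment_1 s (Rgt_not_eq _ _ Hs)))).
    apply locally_pos, Ht. }
  pose proof (is_derive_unique _ _ _ (is_derive_central_moment 1 t Ht)) as E.
  rewrite (is_derive_unique _ _ _ D0), central_moment_0 in E; simpl pred in E.
  change (INR 1) with 1 in E.
  apply (Rmult_eq_compat_r t) in E; unfold Rdiv in E.
  rewrite Rmult_assoc, Rinv_l, Rmult_0_l in E by lra; lra.
Qed.

Lemma central_moment_isobaric (k : nat) :
  isobaric (theta_series b) k (gauss_moment k) (central_moment k).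
Proof.
  cut (isobaric (theta_series b) k (gauss_moment k) (central_moment k) /\
       isobaric (theta_series b) (S k) (gauss_moment (S k)) (central_moment (S k)));
    [tauto|].
  induction k as [|k [IHk IHSk]]; split.
  - apply (isobaric_ext _ _ _ _ _ (isobaric_const _ 1)); intros; now rewrite central_moment_0.
  - apply (isobaric_ext _ _ _ _ _ (isobaric_zero _ 1)); intros t Ht.
    rewrite central_moment_1; lra.
  - exact IHSk.
  - destruct (isobaric_euler (theta_series b)
                (fun j t Ht => is_derive_theta b b_entire j t (Rgt_not_eq _ _ Ht)) _ _ _ IHSk)
      as [f' [Df If']].
    apply (isobaric_congr _ _ _ _ _ _ _
             (isobaric_plus _ _ _ _ _ _ If'
                (isobaric_scal _ _ _ (INR (S k)) _ (isobaric_mul_G2 _ _ _ _ IHk))));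
      [reflexivity|simpl; ring|].
    intros t Ht.
    rewrite <- (is_derive_unique _ _ _ (Df t Ht)),
      (is_derive_unique _ _ _ (is_derive_central_moment (S k) t Ht)).
    simpl pred; field; lra.
Qed.

Lemma Series_khinchin_pmf (h : nat -> R) (t : R) :
  Series (fun n => h n * khinchin_pmf a t n) = Series (fun n => h n * (a n * t ^ n)) / PSeries a t.
Proof.
  unfold khinchin_pmf, Rdiv; rewrite <- Series_scal_r; apply Series_ext; intro n; ring.
Qed.

Lemma Series_centred_pmf (k : nat) (t s : R) :
  Series (fun n => ((INR n - theta_series b 1 t) / s) ^ k * khinchin_pmf a t n)
  = central_moment k t / s ^ k.
Proof.
  rewrite Series_khinchin_pmf; unfold central_moment, mixed_moment, Rdiv.
  rewrite <- Series_scal_r, <- Series_scal_r, <- Series_scal_r; apply Series_ext; intro n.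
  unfold mixed_term; rewrite Rpow_mult_distr, pow_inv; simpl; ring.
Qed.

Lemma kmean_exp (t : R) : 0 < t -> kmean a t = theta_series b 1 t.
Proof.
  intro Ht; unfold kmean; rewrite Series_khinchin_pmf.
  rewrite (Series_ext _ (fun n => INR n ^ 1 * (a n * t ^ n))) by (intro; simpl; ring).
  rewrite (is_series_unique _ _ (is_series_theta a a_entire 1 t)), theta_1_exp by lra.
  field; apply Rgt_not_eq, f_pos.
Qed.

Lemma kvar_exp (t : R) : 0 < t -> kvar a t = theta_series b 2 t.
Proof.
  intro Ht; unfold kvar; rewrite kmean_exp by exact Ht.
  rewrite <- central_moment_2 by exact Ht.
  replace (central_moment 2 t) with (central_moment 2 t / 1 ^ 2) by (simpl; field).
  rewrite <- Series_centred_pmf; apply Series_ext; intro n; now rewrite Rdiv_1_r.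
Qed.

Lemma knorm_moment_exp (k : nat) (t : R) : 0 < t ->
  knorm_moment a t k = central_moment k t / sqrt (theta_series b 2 t) ^ k.
Proof.
  intro Ht; unfold knorm_moment; rewrite kvar_exp, kmean_exp by exact Ht.
  apply Series_centred_pmf.
Qed.

End KhinchinExp.

(** * Growth of G_j for non-negative coefficients of finite order *)

Section NonnegSeries.

Variable u : nat -> R.
Hypothesis u_nonneg : forall k, 0 <= u k.

Lemma sum_n_nonneg (n : nat) : 0 <= sum_n u n.
Proof.
  induction n as [|n IH]; [rewrite sum_O; apply u_nonneg|].
  rewrite sum_Sn; change (0 <= sum_n u n + u (S n)); specialize (u_nonneg (S n)); lra.
Qed.

Lemma sum_n_le_series (l : R) (n : nat) : is_series u l -> sum_n u n <= l.
Proof.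
  intro Hl; apply (is_lim_seq_incr_compare (sum_n u) l Hl); intro k.
  rewrite sum_Sn; change (sum_n u k <= sum_n u k + u (S k)); specialize (u_nonneg (S k)); lra.
Qed.

Lemma term_le_series (l : R) (n : nat) : is_series u l -> u n <= l.
Proof.
  intro Hl; apply Rle_trans with (2 := sum_n_le_series l n Hl).
  destruct n as [|n]; [rewrite sum_O; lra|].
  rewrite sum_Sn; change (u (S n) <= sum_n u n + u (S n)); pose proof (sum_n_nonneg n); lra.
Qed.

End NonnegSeries.

Lemma is_series_RtoC (u : nat -> R) (l : R) :
  is_series u l -> @is_series C_AbsRing C_NormedModule (fun n => RtoC (u n)) (RtoC l).
Proof.
  intro Hl; apply (filterlim_locally_ball_norm (K := C_AbsRing)); intro eps.
  apply (filterlim_locally_ball_norm (K := R_AbsRing)) with (eps := eps) in Hl.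
  revert Hl; apply filter_imp; intros n Hn; unfold ball_norm in *.
  assert (E : forall k, sum_n (fun n => RtoC (u n)) k = RtoC (sum_n u k)).
  { induction k as [|k IH]; [now rewrite !sum_O|].
    rewrite !sum_Sn, IH; symmetry; apply RtoC_plus. }
  rewrite E; change (Cmod (RtoC (sum_n u n) - RtoC l)%C < eps).
  rewrite <- RtoC_minus, Cmod_R; exact Hn.
Qed.

Lemma exp_le_mono (x y : R) : x <= y -> exp x <= exp y.
Proof.
  intro H; destruct (Rle_lt_or_eq_dec _ _ H) as [Hlt| ->]; [|lra].
  apply Rlt_le, exp_increasing, Hlt.
Qed.

Lemma exists_nat_ceil (x : R) : 0 <= x -> exists N : nat, x <= INR N <= x + 1.
Proof.
  intro Hx; destruct (archimed x) as [H1 H2].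
  exists (Z.to_nat (up x)); rewrite INR_IZR_INZ, Z2Nat.id; [lra|].
  apply le_IZR; lra.
Qed.

Lemma pow_div_le_exp (n : nat) (y : R) : (1 <= n)%nat -> 0 <= y -> (y / INR n) ^ n <= exp y.
Proof.
  intros Hn Hy; assert (Hn' : 0 < INR n) by (apply lt_0_INR; lia).
  assert (Hyn : 0 <= y / INR n) by (apply Rdiv_le_0_compat; lra).
  replace (exp y) with (exp (y / INR n) ^ n).
  - apply pow_incr; split; [exact Hyn|]; pose proof (exp_ineq1_le (y / INR n)); lra.
  - rewrite <- (exp_ln (exp (y / INR n) ^ n)) by (apply pow_lt, exp_pos).
    rewrite ln_pow, ln_exp by apply exp_pos; f_equal; field; lra.
Qed.

Lemma pow_le_mul_pow2 (j n : nat) : (1 <= j)%nat -> INR n ^ j <= (INR j / ln 2) ^ j * 2 ^ n.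
Proof.
  intro Hj; pose proof ln_lt_2 as Hln2; assert (Hj' : 0 < INR j) by (apply lt_0_INR; lia).
  assert (E : 2 ^ n = exp (INR n * ln 2)) by (rewrite <- ln_pow, exp_ln; [|apply pow_lt|]; lra).
  replace (INR n ^ j) with ((INR j / ln 2) ^ j * (INR n * ln 2 / INR j) ^ j)
    by (rewrite <- Rpow_mult_distr; f_equal; field; lra).
  rewrite E; apply Rmult_le_compat_l.
  - apply pow_le, Rdiv_le_0_compat; lra.
  - apply pow_div_le_exp; [exact Hj|]; apply Rmult_le_pos; [apply pos_INR|lra].
Qed.

Lemma pow_le_sqr_mul (j n N : nat) : (2 <= j)%nat -> (n <= N)%nat ->
  INR n ^ j <= INR N ^ (j - 2) * INR n ^ 2.
Proof.
  intros Hj HnN; replace j with (j - 2 + 2)%nat at 1 by lia; rewrite pow_add.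
  apply Rmult_le_compat_r; [apply pow_le, pos_INR|].
  apply pow_incr; split; [apply pos_INR|apply le_INR, HnN].
Qed.

Lemma is_lim_pow_0 (h : R -> R) (p : nat) : (1 <= p)%nat ->
  is_lim h p_infty 0 -> is_lim (fun t => h t ^ p) p_infty 0.
Proof.
  intros Hp Hh; induction p as [|p IH]; [lia|].
  destruct p as [|p]; [apply (is_lim_ext h); [intro; simpl; ring|exact Hh]|].
  apply (is_lim_ext (fun t => h t * h t ^ S p)); [reflexivity|].
  rewrite <- (Rmult_0_l 0); apply (is_lim_mult _ _ _ 0 0 Hh (IH ltac:(lia)) I).
Qed.

Lemma is_lim_normalized_0 (F G2 Nb : R -> R) (C : R) (j : nat) : (3 <= j)%nat ->
  Rbar_locally p_infty (fun t => 0 <= F t <= Nb t ^ (j - 2) * G2 t + C) ->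
  is_lim (fun t => Nb t / sqrt (G2 t)) p_infty 0 -> is_lim G2 p_infty p_infty ->
  is_lim (fun t => F t / sqrt (G2 t) ^ j) p_infty 0.
Proof.
  intros Hj HF HN HG.
  destruct (Nat.le_exists_sub 2 j) as [p [-> _]]; [lia|].
  replace (p + 2 - 2)%nat with p in HF by lia.
  assert (Hinv : is_lim (fun t => / sqrt (G2 t)) p_infty 0)
    by exact (is_lim_inv _ _ _ (is_lim_sqrt_p _ _ HG) ltac:(discriminate)).
  apply (is_lim_le_le_loc (fun _ => 0)
           (fun t => (Nb t / sqrt (G2 t)) ^ p + C * (/ sqrt (G2 t)) ^ (p + 2)));
    [|apply is_lim_const|].
  - assert (Hpos : Rbar_locally p_infty (fun t => 0 < G2 t))
      by exact (HG (fun y => 0 < y) (ex_intro _ 0 (fun y Hy => Hy))).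
    generalize (filter_and _ _ HF Hpos); apply filter_imp; intros t [[HF0 HF1] Ht].
    set (s := sqrt (G2 t)).
    assert (Hs : 0 < s) by (apply sqrt_lt_R0, Ht).
    assert (Hss : s * s = G2 t) by (apply sqrt_sqrt; lra).
    split; [apply Rdiv_le_0_compat; [exact HF0|apply pow_lt, Hs]|].
    apply Rle_trans with ((Nb t ^ p * G2 t + C) / s ^ (p + 2)).
    + unfold Rdiv; apply Rmult_le_compat_r; [apply Rlt_le, Rinv_0_lt_compat, pow_lt, Hs|exact HF1].
    + right; rewrite <- Hss; unfold Rdiv; rewrite Rpow_mult_distr, !pow_inv, pow_add.
      field; split; [lra|apply pow_nonzero; lra].
  - rewrite <- (Rplus_0_r 0); apply (is_lim_plus _ _ _ 0 0); [| |reflexivity].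
    + destruct p as [|p]; [lia|]; apply is_lim_pow_0; [lia|exact HN].
    + rewrite <- (Rmult_0_r C); apply (is_lim_scal_l _ C _ 0), is_lim_pow_0; [lia|exact Hinv].
Qed.

Lemma split_term_le (j n N : nat) (C x : R) : (2 <= j)%nat -> 0 <= x ->
  INR n ^ j <= C * 2 ^ n ->
  INR n ^ j * x <= INR N ^ (j - 2) * (INR n ^ 2 * x) + C / 2 ^ N * (2 ^ n * 2 ^ n * x).
Proof.
  intros Hj Hx HC.
  assert (H2n : 0 < 2 ^ n) by (apply pow_lt; lra).
  assert (H2N : 0 < 2 ^ N) by (apply pow_lt; lra).
  assert (HC0 : 0 <= C * 2 ^ n) by (apply Rle_trans with (2 := HC), pow_le, pos_INR).
  assert (T1 : 0 <= INR N ^ (j - 2) * (INR n ^ 2 * x))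
    by (apply Rmult_le_pos; [|apply Rmult_le_pos]; auto; apply pow_le, pos_INR).
  assert (E2 : C / 2 ^ N * (2 ^ n * 2 ^ n * x) = C * 2 ^ n * x * (2 ^ n / 2 ^ N))
    by (field; lra).
  assert (T2 : 0 <= C / 2 ^ N * (2 ^ n * 2 ^ n * x))
    by (rewrite E2; apply Rmult_le_pos; [apply Rmult_le_pos|apply Rdiv_le_0_compat]; lra).
  destruct (le_lt_dec n N) as [HnN|HNn].
  - assert (INR n ^ j * x <= INR N ^ (j - 2) * (INR n ^ 2 * x)); [|lra].
    rewrite <- Rmult_assoc; apply Rmult_le_compat_r, pow_le_sqr_mul; assumption.
  - assert (INR n ^ j * x <= C / 2 ^ N * (2 ^ n * 2 ^ n * x)); [|lra].
    assert (H1 : 1 <= 2 ^ n / 2 ^ N).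
    { apply (Rmult_le_reg_r (2 ^ N)); [exact H2N|]; unfold Rdiv.
      rewrite Rmult_assoc, Rinv_l, Rmult_1_l, Rmult_1_r by lra; apply Rle_pow; [lra|lia]. }
    rewrite E2; apply Rle_trans with (C * 2 ^ n * x); [apply Rmult_le_compat_r; assumption|].
    rewrite <- (Rmult_1_r (C * 2 ^ n * x)) at 1; apply Rmult_le_compat_l; [|exact H1].
    apply Rmult_le_pos; assumption.
Qed.

Section NonnegCoefficients.

Variable b : nat -> R.
Hypothesis b_entire : CV_radius b = p_infty.
Hypothesis b_nonneg : forall n, 0 <= b n.

Lemma theta_term_le (j n : nat) (t : R) : 0 <= t ->
  INR n ^ j * (b n * t ^ n) <= theta_series b j t.
Proof.
  intro Ht; apply (term_le_series (fun n => INR n ^ j * (b n * t ^ n))).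
  - intro k; apply Rmult_le_pos; [apply pow_le, pos_INR|apply Rmult_le_pos, pow_le; auto].
  - apply is_series_theta, b_entire.
Qed.

Lemma theta_series_nonneg (j : nat) (t : R) : 0 <= t -> 0 <= theta_series b j t.
Proof.
  intro Ht; apply Rle_trans with (2 := theta_term_le j 0 t Ht).
  apply Rmult_le_pos; [apply pow_le, pos_INR|apply Rmult_le_pos, pow_le; auto].
Qed.

Lemma max_modulus_nonneg (r : R) : 0 <= r -> max_modulus b r = PSeries b r.
Proof.
  intro Hr.
  assert (Hs : is_series (fun n => b n * r ^ n) (PSeries b r)).
  { rewrite <- theta_series_0; eapply is_series_ext; [|apply (is_series_theta b b_entire 0)].
    intro n; simpl; ring. }
  assert (Hnn : forall n, 0 <= b n * r ^ n) by (intro; apply Rmult_le_pos, pow_le; auto).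
  unfold max_modulus; rewrite (is_lub_Rbar_unique _ (Finite (PSeries b r))); [reflexivity|].
  split.
  - intros y (z & l & Hz & Hl & ->).
    change (Rbar_le (Cmod l) (PSeries b r)).
    apply (filterlim_le (F := eventually)
             (fun n => Cmod (sum_n (fun k => scal (pow_n z k) (RtoC (b k))) n))
             (fun _ => PSeries b r)).
    + exists 0%nat; intros n _; apply Rle_trans with (2 := sum_n_le_series _ Hnn _ n Hs).
      change (norm (sum_n_m (fun k => scal (pow_n z k) (RtoC (b k))) 0 n)
              <= sum_n_m (fun k => b k * r ^ k) 0 n).
      eapply Rle_trans; [apply (norm_sum_n_m (K := C_AbsRing) (V := C_NormedModule))|].
      apply sum_n_m_le; intro k.
      change (Cmod (pow_n z k * RtoC (b k))%C <= b k * r ^ k).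
      rewrite Cmod_mult; change (Cmod (z ^ k)%C * Cmod (RtoC (b k)) <= b k * r ^ k).
      rewrite Cmod_pow, Cmod_R, Hz, Rabs_pos_eq by auto; lra.
    + eapply filterlim_comp; [exact Hl|].
      exact (filterlim_norm (K := C_AbsRing) (V := C_NormedModule) l).
    + apply filterlim_const.
  - intros u Hu; apply Hu; exists (RtoC r), (RtoC (PSeries b r)).
    rewrite Cmod_R, Rabs_pos_eq by auto.
    split; [reflexivity|split; [|rewrite Cmod_R, Rabs_pos_eq; [reflexivity|]]].
    + eapply is_series_ext; [|apply (is_series_RtoC _ _ Hs)]; intro n.
      change (RtoC (b n * r ^ n) = (RtoC r ^ n * RtoC (b n))%C).
      rewrite <- RtoC_pow, <- RtoC_mult, Rmult_comm; reflexivity.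
    + rewrite <- theta_series_0; apply theta_series_nonneg, Hr.
Qed.

Lemma finite_order_exp_bound : finite_order b ->
  exists (k : nat) (R1 : R), forall r, R1 <= r -> PSeries b r <= exp (r ^ k).
Proof.
  intros (K & R0 & HR0 & HK).
  destruct (exists_nat_ceil (Rabs K) (Rabs_pos K)) as [k [Hk _]].
  exists k, (R0 + 1); intros r Hr.
  destruct (Rle_lt_dec (PSeries b r) 1) as [Hle|Hgt].
  { apply Rle_trans with 1; [exact Hle|rewrite <- exp_0; apply exp_le_mono, pow_le; lra]. }
  specialize (HK r ltac:(lra)); rewrite max_modulus_nonneg in HK by (auto; lra).
  assert (Hlnr : 0 < ln r) by (rewrite <- ln_1; apply ln_increasing; lra).
  assert (Hlng : 0 < ln (PSeries b r)) by (rewrite <- ln_1; apply ln_increasing; lra).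
  assert (Hlnln : ln (ln (PSeries b r)) <= ln (r ^ k)).
  { rewrite ln_pow by lra.
    apply Rle_trans with (K * ln r).
    - apply (Rmult_le_reg_r (/ ln r)); [apply Rinv_0_lt_compat, Hlnr|].
      rewrite Rmult_assoc, Rinv_r, Rmult_1_r by lra; exact HK.
    - apply Rmult_le_compat_r; [lra|]; pose proof (Rle_abs K); lra. }
  rewrite <- (exp_ln (PSeries b r)) by lra; apply exp_le_mono.
  rewrite <- (exp_ln (ln (PSeries b r))), <- (exp_ln (r ^ k)) by (try apply pow_lt; lra).
  apply exp_le_mono, Hlnln.
Qed.

Lemma theta_split_bound (j N : nat) (t : R) : (2 <= j)%nat -> 0 < t ->
  theta_series b j t <=
  INR N ^ (j - 2) * theta_series b 2 t + (INR j / ln 2) ^ j / 2 ^ N * PSeries b (4 * t).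
Proof.
  intros Hj Ht.
  rewrite <- theta_series_0, !theta_series_Series by exact b_entire.
  rewrite <- !Series_scal_l, <- Series_plus
    by (apply (ex_series_scal_l (V := R_NormedModule)), ex_series_theta, b_entire).
  apply Series_le; [intro n; split|].
  - apply Rmult_le_pos; [apply pow_le, pos_INR|apply Rmult_le_pos, pow_le; [auto|lra]].
  - replace (INR n ^ 0 * (b n * (4 * t) ^ n)) with (2 ^ n * 2 ^ n * (b n * t ^ n))
      by (replace (4 * t) with (2 * 2 * t) by ring; rewrite !Rpow_mult_distr, pow_O; ring).
    apply split_term_le; [exact Hj|apply Rmult_le_pos, pow_le; [auto|lra]|].
    apply pow_le_mul_pow2; lia.
  - apply (ex_series_plus (V := R_NormedModule));
      apply (ex_series_scal_l (V := R_NormedModule)), ex_series_theta, b_entire.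
Qed.

Lemma theta_poly_bound (j D : nat) (t : R) : (2 <= j)%nat -> 0 < t ->
  (forall n, (D < n)%nat -> b n = 0) -> theta_series b j t <= INR D ^ (j - 2) * theta_series b 2 t.
Proof.
  intros Hj Ht HD.
  rewrite !theta_series_Series, <- Series_scal_l by exact b_entire.
  apply Series_le; [intro n; split|].
  - apply Rmult_le_pos; [apply pow_le, pos_INR|apply Rmult_le_pos, pow_le; [auto|lra]].
  - destruct (le_lt_dec n D) as [HnD|HDn]; [|rewrite HD by exact HDn; lra].
    rewrite <- (Rmult_assoc (INR D ^ (j - 2))).
    apply Rmult_le_compat_r; [apply Rmult_le_pos, pow_le; [auto|lra]|].
    apply pow_le_sqr_mul; assumption.
  - apply (ex_series_scal_l (V := R_NormedModule)), ex_series_theta, b_entire.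
Qed.

Lemma theta2_ge_coef (n p : nat) (t : R) : (1 <= n)%nat -> (p <= n)%nat -> 1 <= t ->
  b n * t ^ p <= theta_series b 2 t.
Proof.
  intros Hn Hp Ht; apply Rle_trans with (2 := theta_term_le 2 n t ltac:(lra)).
  assert (HnR : 1 <= INR n) by (apply (le_INR 1); exact Hn).
  assert (Htp : t ^ p <= t ^ n) by (apply Rle_pow; assumption).
  assert (Hbt : 0 <= b n * t ^ n) by (apply Rmult_le_pos, pow_le; [auto|lra]).
  apply Rle_trans with (b n * t ^ n); [apply Rmult_le_compat_l; auto|].
  rewrite <- (Rmult_1_l (b n * t ^ n)) at 1; apply Rmult_le_compat_r; [exact Hbt|].
  simpl; nra.
Qed.

Hypothesis b_nonconst : exists n0, (1 <= n0)%nat /\ b n0 <> 0.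

Lemma theta2_pos (t : R) : 0 < t -> 0 < theta_series b 2 t.
Proof.
  intro Ht; destruct b_nonconst as [n0 [Hn0 Hb0]].
  apply Rlt_le_trans with (2 := theta_term_le 2 n0 t ltac:(lra)).
  assert (0 < b n0) by (specialize (b_nonneg n0); lra).
  apply Rmult_lt_0_compat; [apply pow_lt, lt_0_INR; lia|apply Rmult_lt_0_compat, pow_lt; auto].
Qed.

Lemma theta2_lim : is_lim (theta_series b 2) p_infty p_infty.
Proof.
  destruct b_nonconst as [n0 [Hn0 Hb0]].
  assert (Hb : 0 < b n0) by (specialize (b_nonneg n0); lra).
  apply (is_lim_le_p_loc (fun t => b n0 * t)).
  - exists 1; intros t Ht; rewrite <- (pow_1 t) at 1; apply theta2_ge_coef; lra || lia.
  - pose proof (is_lim_scal_l _ (b n0) _ _ (is_lim_id p_infty)) as L.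
    simpl in L; destruct (Rle_dec 0 (b n0)) as [Hle|]; [|lra].
    destruct (Rle_lt_or_eq_dec _ _ Hle); [exact L|lra].
Qed.

(* The series is split at N ≈ 2 (4t)^k, so that 2^N >= exp((4t)^k) >= g(4t) absorbs
   the tail in [theta_split_bound]. *)
Lemma theta_exp_order_bound (j k : nat) (R1 t : R) : (2 <= j)%nat -> 0 < t -> R1 <= 4 * t ->
  (forall r, R1 <= r -> PSeries b r <= exp (r ^ k)) ->
  theta_series b j t <= (2 * (4 * t) ^ k + 1) ^ (j - 2) * theta_series b 2 t + (INR j / ln 2) ^ j.
Proof.
  intros Hj Ht HR1 Hk; set (C := (INR j / ln 2) ^ j).
  assert (H4t : 0 <= (4 * t) ^ k) by (apply pow_le; lra).
  destruct (exists_nat_ceil (2 * (4 * t) ^ k)) as [N [HN1 HN2]]; [lra|].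
  assert (H2N : 0 < 2 ^ N) by (apply pow_lt; lra).
  assert (Hexp : PSeries b (4 * t) <= 2 ^ N).
  { apply Rle_trans with (1 := Hk _ HR1).
    rewrite <- (exp_ln (2 ^ N)), ln_pow by lra; apply exp_le_mono.
    pose proof ln_lt_2; nra. }
  assert (HC : 0 <= C)
    by (apply pow_le, Rdiv_le_0_compat; [apply pos_INR|pose proof ln_lt_2; lra]).
  assert (HG0 : 0 <= PSeries b (4 * t))
    by (rewrite <- theta_series_0; apply theta_series_nonneg; auto; lra).
  assert (HG2 : 0 <= theta_series b 2 t) by (apply theta_series_nonneg; auto; lra).
  apply Rle_trans with (1 := theta_split_bound j N t Hj Ht); apply Rplus_le_compat.
  - apply Rmult_le_compat_r; [exact HG2|]; apply pow_incr; split; [apply pos_INR|exact HN2].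
  - apply Rle_trans with (C / 2 ^ N * 2 ^ N); [|right; field; lra].
    apply Rmult_le_compat_l; [apply Rdiv_le_0_compat; assumption|exact Hexp].
Qed.

Lemma is_lim_pow_div_sqrt_theta2 (k n1 : nat) : (2 * k + 2 <= n1)%nat -> b n1 <> 0 ->
  is_lim (fun t => (2 * (4 * t) ^ k + 1) / sqrt (theta_series b 2 t)) p_infty 0.
Proof.
  intros Hn1 Hb1; assert (Hb : 0 < b n1) by (specialize (b_nonneg n1); lra).
  set (c := 3 * 4 ^ k / sqrt (b n1)).
  apply (is_lim_le_le_loc (fun _ => 0) (fun t => c * / t)); [|apply is_lim_const|].
  - exists 1; intros t Ht.
    assert (Hsb : 0 < sqrt (b n1)) by (apply sqrt_lt_R0, Hb).
    assert (Htk : 1 <= (4 * t) ^ k) by (rewrite <- (pow1 k); apply pow_incr; lra).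
    assert (Hlow : sqrt (b n1) * t ^ (k + 1) <= sqrt (theta_series b 2 t)).
    { rewrite <- (sqrt_pow2 (t ^ (k + 1))), <- sqrt_mult, <- pow_mult
        by (repeat apply pow_le; lra).
      apply sqrt_le_1_alt, theta2_ge_coef; lra || lia. }
    assert (Hlow0 : 0 < sqrt (b n1) * t ^ (k + 1)) by (apply Rmult_lt_0_compat, pow_lt; lra).
    split; [apply Rdiv_le_0_compat; lra|].
    apply Rle_trans with (3 * (4 * t) ^ k / (sqrt (b n1) * t ^ (k + 1))).
    + unfold Rdiv; apply Rmult_le_compat; try lra.
      * apply Rlt_le, Rinv_0_lt_compat; lra.
      * apply Rinv_le_contravar; lra.
    + right; unfold c; rewrite Rpow_mult_distr, pow_add; field; split; [|split]; try lra.
      apply pow_nonzero; lra.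
  - rewrite <- (Rmult_0_r c); apply (is_lim_scal_l _ c _ 0).
    exact (is_lim_inv _ _ _ (is_lim_id p_infty) ltac:(discriminate)).
Qed.

(* If some b_n with n >= 2k + 2 is nonzero, G_2 >= b_n t^(2k+2) outgrows the square of
   the splitting point N ≈ 2 (4t)^k; otherwise b is a polynomial and G_j <= D^(j-2) G_2. *)
Lemma theta_ratio_vanishes : finite_order b ->
  forall j, (3 <= j)%nat ->
  is_lim (fun t => theta_series b j t / sqrt (theta_series b 2 t) ^ j) p_infty 0.
Proof.
  intros Hfo j Hj; destruct (finite_order_exp_bound Hfo) as (k & R1 & Hk).
  destruct (classic (exists n1, (2 * k + 2 <= n1)%nat /\ b n1 <> 0)) as [[n1 [Hn1 Hb1]]|Hpoly].
  - apply (is_lim_normalized_0 _ _ (fun t => 2 * (4 * t) ^ k + 1) ((INR j / ln 2) ^ j));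
      [exact Hj| | |exact theta2_lim].
    + exists (1 + Rabs R1); intros t Ht; pose proof (Rle_abs R1); pose proof (Rabs_pos R1).
      split; [apply theta_series_nonneg; auto; lra|].
      apply (theta_exp_order_bound j k R1); [lia|lra|lra|exact Hk].
    + exact (is_lim_pow_div_sqrt_theta2 k n1 Hn1 Hb1).
  - apply (is_lim_normalized_0 _ _ (fun _ => INR (2 * k + 1)) 0); [exact Hj| | |exact theta2_lim].
    + exists 0; intros t Ht; split; [apply theta_series_nonneg; auto; lra|].
      rewrite Rplus_0_r; apply theta_poly_bound; [lia|exact Ht|].
      intros n Hn; apply NNPP; intro Hbn; apply Hpoly; exists n; split; [lia|exact Hbn].
    + rewrite <- (Rmult_0_r (INR (2 * k + 1))).
      apply (is_lim_scal_l _ _ _ 0), (is_lim_inv _ _ _ (is_lim_sqrt_p _ _ theta2_lim));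
        discriminate.
Qed.

End NonnegCoefficients.

(** * Gaussian moments *)

Definition gauss (x : R) : R := exp (- x ^ 2 / 2).

Lemma gauss_opp (x : R) : gauss (- x) = gauss x.
Proof. unfold gauss; replace ((- x) ^ 2) with (x ^ 2) by ring; reflexivity. Qed.

Lemma is_derive_gauss (x : R) : is_derive gauss x (- x * gauss x).
Proof.
  unfold gauss; auto_derive; [exact I|].
  replace (- (x * (x * 1)) * / 2) with (- x ^ 2 / 2) by (simpl; field); field.
Qed.

Lemma is_derive_pow_gauss (m : nat) (x : R) :
  is_derive (fun y => y ^ m * gauss y) x ((INR m * x ^ pred m - x ^ S m) * gauss x).
Proof.
  eapply is_derive_eq.
  { apply is_derive_Rmult; [apply (is_derive_pow (fun y => y)), (is_derive_id (K := R_AbsRing))|].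
    apply is_derive_gauss. }
  unfold one; simpl; ring.
Qed.

Lemma continuous_pow_gauss (m : nat) (x : R) : continuous (fun y => y ^ m * gauss y) x.
Proof.
  apply (ex_derive_continuous (K := R_AbsRing) (V := R_NormedModule)).
  eexists; apply is_derive_pow_gauss.
Qed.

Lemma is_lim_pow_gauss_p (k : nat) : is_lim (fun x => x ^ k * gauss x) p_infty 0.
Proof.
  set (n := S k); set (c := (2 * INR n) ^ n).
  assert (Hn : 0 < INR n) by (apply lt_0_INR; unfold n; lia).
  assert (Hc : 0 < c) by (apply pow_lt; lra).
  apply (is_lim_le_le_loc (fun _ => 0) (fun x => c * / x)); [|apply is_lim_const|].
  - exists 1; intros x Hx.
    assert (Hxk : 0 < x ^ k) by (apply pow_lt; lra).
    assert (Hx2n : 0 < x ^ (2 * n)) by (apply pow_lt; lra).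
    assert (Hexp : x ^ (2 * n) / c <= exp (x ^ 2 / 2)).
    { replace (x ^ (2 * n) / c) with ((x ^ 2 / 2 / INR n) ^ n)
        by (unfold c, Rdiv; rewrite pow_mult, !Rpow_mult_distr, !pow_inv;
            field; split; apply pow_nonzero; lra).
      apply pow_div_le_exp; [unfold n; lia|]; pose proof (pow2_ge_0 x); lra. }
    split; [apply Rlt_le, Rmult_lt_0_compat, exp_pos; exact Hxk|].
    replace (gauss x) with (/ exp (x ^ 2 / 2))
      by (unfold gauss; rewrite <- exp_Ropp; f_equal; field).
    apply Rle_trans with (x ^ k * / (x ^ (2 * n) / c)).
    + apply Rmult_le_compat_l; [lra|]; apply Rinv_le_contravar; [|exact Hexp].
      apply Rdiv_lt_0_compat; assumption.
    + replace (x ^ k * / (x ^ (2 * n) / c)) with (c * / x * / x ^ (S k))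
        by (replace (2 * n)%nat with (k + 1 + S k)%nat by (unfold n; lia);
            rewrite !pow_add; field; repeat split; try apply pow_nonzero; lra).
      rewrite <- (Rmult_1_r (c * / x)) at 2; apply Rmult_le_compat_l.
      * apply Rmult_le_pos; [lra|apply Rlt_le, Rinv_0_lt_compat; lra].
      * rewrite <- Rinv_1; apply Rinv_le_contravar; [lra|].
        rewrite <- (pow1 (S k)); apply pow_incr; lra.
  - rewrite <- (Rmult_0_r c); apply (is_lim_scal_l _ c _ 0).
    exact (is_lim_inv _ _ _ (is_lim_id p_infty) ltac:(discriminate)).
Qed.

Lemma is_lim_pow_gauss_m (k : nat) : is_lim (fun x => x ^ k * gauss x) m_infty 0.
Proof.
  assert (L : is_lim (fun x => (- x) ^ k * gauss (- x)) m_infty 0).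
  { apply (is_lim_comp (fun x => x ^ k * gauss x) (fun x => - x) m_infty 0 p_infty);
      [apply is_lim_pow_gauss_p| |exists 0; intros; discriminate].
    exact (is_lim_opp _ _ _ (is_lim_id m_infty)). }
  apply (is_lim_scal_l _ ((-1) ^ k)) in L; simpl in L; rewrite Rmult_0_r in L.
  eapply is_lim_ext; [|exact L]; intro x; cbv beta.
  rewrite gauss_opp; replace (- x) with (-1 * x) by ring; rewrite Rpow_mult_distr.
  rewrite <- !Rmult_assoc, <- Rpow_mult_distr; replace (-1 * -1) with 1 by ring.
  rewrite pow1; ring.
Qed.

Local Notation is_RInt_line f l :=
  (is_RInt_gen f (Rbar_locally m_infty) (Rbar_locally p_infty) l).

Lemma is_RInt_gen_of_derive (f f' : R -> R) (la lb : R) :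
  (forall x, is_derive f x (f' x)) -> (forall x, continuous f' x) ->
  is_lim f m_infty la -> is_lim f p_infty lb ->
  is_RInt_line f' (lb - la).
Proof.
  intros Df Cf La Lb.
  assert (E : forall x, Derive f x = f' x) by (intro; apply is_derive_unique, Df).
  apply (is_RInt_gen_ext (Derive f)); [apply filter_forall; intros _ x _; apply E|].
  apply is_RInt_gen_Derive; [| |exact La|exact Lb]; apply filter_forall; intros _ x _.
  - eexists; apply Df.
  - apply (continuous_ext f'); [intro; symmetry; apply E|apply Cf].
Qed.

Definition gauss_int (x : R) : R := RInt gauss 0 x.

Lemma continuous_gauss (x : R) : continuous gauss x.
Proof.
  apply (continuous_ext (fun y => y ^ 0 * gauss y)); [intro; simpl; ring|].
  apply continuous_pow_gauss.
Qed.

Lemma ex_RInt_gauss (a b : R) : ex_RInt gauss a b.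
Proof.
  apply (ex_RInt_continuous (V := R_CompleteNormedModule)); intros; apply continuous_gauss.
Qed.

Lemma is_derive_gauss_int (x : R) : is_derive gauss_int x (gauss x).
Proof.
  apply (is_derive_RInt gauss gauss_int 0); [|apply continuous_gauss].
  apply filter_forall; intro y; apply (RInt_correct (V := R_CompleteNormedModule)), ex_RInt_gauss.
Qed.

Lemma RInt_const_R (c a b : R) : RInt (fun _ => c) a b = (b - a) * c.
Proof. exact (RInt_const (V := R_CompleteNormedModule) a b c). Qed.

Lemma ex_RInt_const_R (c a b : R) : ex_RInt (fun _ => c) a b.
Proof.
  apply (ex_RInt_continuous (V := R_CompleteNormedModule)); intros; apply continuous_const.
Qed.

Lemma is_derive_0_const (f : R -> R) : (forall x, is_derive f x 0) -> forall x, f x = f 0.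
Proof.
  intros Df x.
  assert (I0 : is_RInt (fun _ => 0) 0 x (minus (f x) (f 0))).
  { apply (is_RInt_derive f (fun _ => 0)); intros y _; [apply Df|apply continuous_const]. }
  apply (is_RInt_unique (V := R_CompleteNormedModule)) in I0.
  rewrite RInt_const_R in I0; unfold minus, plus, opp in I0; simpl in I0; lra.
Qed.

Lemma gauss_int_opp (x : R) : gauss_int (- x) = - gauss_int x.
Proof.
  assert (D : forall y, is_derive (fun y => gauss_int (- y) + gauss_int y) y 0).
  { intro y.
    assert (D1 : is_derive (fun y => gauss_int (- y)) y (-1 * gauss (- y))).
    { apply (is_derive_comp gauss_int (fun y => - y)); [apply is_derive_gauss_int|].
      auto_derive; [exact I|ring]. }
    eapply is_derive_eq; [exact (is_derive_plus _ _ y _ _ D1 (is_derive_gauss_int y))|].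
    rewrite gauss_opp; unfold plus; simpl; ring. }
  pose proof (is_derive_0_const _ D x) as E; cbv beta in E.
  rewrite Ropp_0 in E; unfold gauss_int in E |- *; rewrite RInt_point in E.
  change (@zero R_CompleteNormedModule) with 0 in E; lra.
Qed.

Definition gauss_kernel (x u : R) : R := exp (- (x ^ 2 * (1 + u ^ 2)) / 2) / (1 + u ^ 2).

Definition gauss_kernel_int (x : R) : R := RInt (gauss_kernel x) 0 1.

Lemma gauss_kernel_pos (x u : R) : 0 < gauss_kernel x u.
Proof.
  apply Rdiv_lt_0_compat; [apply exp_pos|pose proof (pow2_ge_0 u); lra].
Qed.

Lemma Derive_gauss_kernel (x u : R) :
  Derive (fun z => gauss_kernel z u) x = - x * (gauss x * gauss (x * u)).
Proof.
  apply is_derive_unique; unfold gauss_kernel, gauss.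
  auto_derive; [pose proof (pow2_ge_0 u); simpl in *; lra|].
  rewrite <- exp_plus; replace (- x ^ 2 / 2 + - (x * u) ^ 2 / 2)
    with (- (x * (x * 1) * (1 + u * (u * 1))) * / 2) by (simpl; field).
  field; pose proof (pow2_ge_0 u); simpl in *; lra.
Qed.

Lemma ex_RInt_gauss_kernel (x a b : R) : ex_RInt (gauss_kernel x) a b.
Proof.
  apply (ex_RInt_continuous (V := R_CompleteNormedModule)); intros u _.
  apply (ex_derive_continuous (K := R_AbsRing) (V := R_NormedModule)); unfold gauss_kernel.
  auto_derive; pose proof (pow2_ge_0 u); simpl in *; lra.
Qed.

Lemma is_derive_gauss_kernel_int (x : R) :
  is_derive gauss_kernel_int x (- gauss x * gauss_int x).
Proof.
  eapply is_derive_eq; [apply (is_derive_RInt_param gauss_kernel 0 1 x)|].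
  - apply filter_forall; intros y u _; eexists; apply Derive_correct.
    unfold gauss_kernel; auto_derive; pose proof (pow2_ge_0 u); simpl in *; lra.
  - intros u _.
    apply (continuity_2d_pt_ext (fun y v => - y * exp (- / 2 * ((y * y) * (1 + v * v))))).
    { intros y v; rewrite Derive_gauss_kernel; unfold gauss; rewrite <- exp_plus.
      f_equal; f_equal; simpl; field. }
    apply continuity_2d_pt_mult; [apply continuity_2d_pt_opp, continuity_2d_pt_id1|].
    apply (continuity_1d_2d_pt_comp exp); [apply derivable_continuous_pt, derivable_pt_exp|].
    repeat first [apply continuity_2d_pt_mult | apply continuity_2d_pt_plus
                 | apply continuity_2d_pt_const | apply continuity_2d_pt_id1
                 | apply continuity_2d_pt_id2].
  - apply filter_forall; intro y; apply ex_RInt_gauss_kernel.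
  - rewrite (RInt_ext (V := R_CompleteNormedModule) _
               (fun u => scal (- gauss x) (scal x (gauss (x * u + 0)))))
      by (intros u _; rewrite Derive_gauss_kernel, Rplus_0_r;
          unfold scal; simpl; unfold mult; simpl; ring).
    rewrite (RInt_scal (V := R_CompleteNormedModule)),
      (RInt_comp_lin (V := R_CompleteNormedModule)).
    + unfold gauss_int; rewrite Rmult_0_r, Rplus_0_r, Rmult_1_r, Rplus_0_r; reflexivity.
    + apply ex_RInt_gauss.
    + apply (ex_RInt_continuous (V := R_CompleteNormedModule)); intros z _.
      apply (continuous_scal_r x (fun z => gauss (x * z + 0))).
      apply (continuous_comp (fun z => x * z + 0) gauss); [|apply continuous_gauss].
      apply (ex_derive_continuous (K := R_AbsRing) (V := R_NormedModule)); auto_derive; exact I.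
Qed.

(* Both sides are constant in [x] (their derivatives cancel); at [x = 0] the kernel is
   [1 / (1 + u ^ 2)], whose integral over [0, 1] is [atan 1 = PI / 4]. *)
Lemma gauss_int_sqr (x : R) : gauss_int x ^ 2 + 2 * gauss_kernel_int x = PI / 2.
Proof.
  rewrite (is_derive_0_const (fun y => gauss_int y ^ 2 + 2 * gauss_kernel_int y)).
  - unfold gauss_int, gauss_kernel_int; rewrite RInt_point.
    change (@zero R_CompleteNormedModule) with 0.
    replace (RInt (gauss_kernel 0) 0 1) with (PI / 4); [field|].
    symmetry; apply (is_RInt_unique (V := R_CompleteNormedModule)).
    replace (PI / 4) with (minus (atan 1) (atan 0))
      by (rewrite atan_1, atan_0; unfold minus, plus, opp; simpl; ring).
    apply (is_RInt_ext (fun u => / (1 + u ^ 2))).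
    { intros u _; symmetry; unfold gauss_kernel.
      replace (- (0 ^ 2 * (1 + u ^ 2)) / 2) with 0 by (simpl; field); rewrite exp_0.
      unfold Rdiv; apply Rmult_1_l. }
    apply (is_RInt_derive (V := R_CompleteNormedModule)).
    + intros u _; apply is_derive_Reals, derivable_pt_lim_atan.
    + intros u _; apply (ex_derive_continuous (K := R_AbsRing) (V := R_NormedModule)).
      auto_derive; pose proof (pow2_ge_0 u); simpl in *; lra.
  - intro y; eapply is_derive_eq.
    + apply (is_derive_plus (fun y => gauss_int y ^ 2) (fun y => 2 * gauss_kernel_int y)).
      * apply (is_derive_pow gauss_int 2 y (gauss y)), is_derive_gauss_int.
      * apply is_derive_scal, is_derive_gauss_kernel_int.
    + unfold plus; simpl; ring.
Qed.

Lemma gauss_kernel_int_bounds (x : R) : 0 <= gauss_kernel_int x <= gauss x.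
Proof.
  unfold gauss_kernel_int; split.
  - apply Rle_trans with (RInt (fun _ => 0) 0 1); [right; rewrite RInt_const_R; ring|].
    apply RInt_le; [lra|apply ex_RInt_const_R|apply ex_RInt_gauss_kernel|].
    intros u _; apply Rlt_le, gauss_kernel_pos.
  - apply Rle_trans with (RInt (fun _ => gauss x) 0 1); [|right; rewrite RInt_const_R; ring].
    apply RInt_le; [lra|apply ex_RInt_gauss_kernel|apply ex_RInt_const_R|].
    intros u _; unfold gauss_kernel, gauss.
    pose proof (pow2_ge_0 u); pose proof (pow2_ge_0 x).
    apply Rle_trans with (exp (- (x ^ 2 * (1 + u ^ 2)) / 2)).
    + unfold Rdiv at 1; rewrite <- (Rmult_1_r (exp _)) at 2.
      apply Rmult_le_compat_l; [apply Rlt_le, exp_pos|].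
      rewrite <- Rinv_1; apply Rinv_le_contravar; lra.
    + apply exp_le_mono; nra.
Qed.

Lemma gauss_int_nonneg (x : R) : 0 <= x -> 0 <= gauss_int x.
Proof.
  intro Hx; unfold gauss_int.
  apply Rle_trans with (RInt (fun _ => 0) 0 x); [right; rewrite RInt_const_R; ring|].
  apply RInt_le; [exact Hx|apply ex_RInt_const_R|apply ex_RInt_gauss|].
  intros; apply Rlt_le, exp_pos.
Qed.

Lemma is_lim_gauss_int_p : is_lim gauss_int p_infty (sqrt (PI / 2)).
Proof.
  assert (Lk : is_lim gauss_kernel_int p_infty 0).
  { apply (is_lim_le_le_loc (fun _ => 0) gauss); [|apply is_lim_const|].
    - exists 0; intros; apply gauss_kernel_int_bounds.
    - apply (is_lim_ext (fun x => x ^ 0 * gauss x)); [intro; simpl; ring|].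
      apply is_lim_pow_gauss_p. }
  assert (L : is_lim (fun x => PI / 2 + -2 * gauss_kernel_int x) p_infty (PI / 2)).
  { replace (Finite (PI / 2)) with (Rbar_plus (PI / 2) (Rbar_mult (-2) 0))
      by (simpl; f_equal; ring).
    apply (is_lim_plus _ _ _ (PI / 2) (Rbar_mult (-2) 0)); [apply is_lim_const| |].
    - apply is_lim_scal_l, Lk.
    - simpl; unfold is_Rbar_plus; simpl; f_equal; f_equal; ring. }
  apply (is_lim_ext_loc (fun x => sqrt (PI / 2 + -2 * gauss_kernel_int x))).
  - exists 0; intros x Hx.
    rewrite <- (sqrt_pow2 (gauss_int x)) by (apply gauss_int_nonneg; lra).
    f_equal; pose proof (gauss_int_sqr x); lra.
  - unfold is_lim; eapply filterlim_comp; [exact L|].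
    apply continuity_pt_filterlim, continuity_pt_sqrt; pose proof PI_RGT_0; lra.
Qed.

Lemma is_lim_gauss_int_m : is_lim gauss_int m_infty (- sqrt (PI / 2)).
Proof.
  assert (L : is_lim (fun x => gauss_int (- x)) m_infty (sqrt (PI / 2))).
  { apply (is_lim_comp gauss_int (fun x => - x) m_infty _ p_infty is_lim_gauss_int_p);
      [exact (is_lim_opp _ _ _ (is_lim_id m_infty))|exists 0; intros; discriminate]. }
  apply (is_lim_ext (fun x => - gauss_int (- x))); [intro x; rewrite gauss_int_opp; ring|].
  exact (is_lim_opp _ _ _ L).
Qed.

Lemma is_RInt_gen_gauss : is_RInt_line gauss (sqrt (2 * PI)).
Proof.
  replace (sqrt (2 * PI)) with (sqrt (PI / 2) - - sqrt (PI / 2)).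
  - apply (is_RInt_gen_of_derive gauss_int);
      [apply is_derive_gauss_int|apply continuous_gauss
      |apply is_lim_gauss_int_m|apply is_lim_gauss_int_p].
  - pose proof PI_RGT_0.
    replace (2 * PI) with (2 ^ 2 * (PI / 2)) by field.
    rewrite sqrt_mult, sqrt_pow2 by (try apply pow_le; lra); ring.
Qed.

Lemma is_RInt_gen_pow_gauss_S (m : nat) (l : R) :
  is_RInt_line (fun x => x ^ pred m * gauss x) l ->
  is_RInt_line (fun x => x ^ S m * gauss x) (INR m * l).
Proof.
  intro Hl.
  assert (HD := is_RInt_gen_of_derive _ _ 0 0 (is_derive_pow_gauss m)
                  ltac:(intro; apply (ex_derive_continuous (K := R_AbsRing) (V := R_NormedModule));
                        unfold gauss; auto_derive; exact I)
                  (is_lim_pow_gauss_m m) (is_lim_pow_gauss_p m)).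
  replace (INR m * l) with (minus (scal (INR m) l) (0 - 0))
    by (unfold minus, plus, opp, scal; simpl; unfold mult; simpl; ring).
  eapply is_RInt_gen_ext;
    [|exact (is_RInt_gen_minus _ _ _ _ (is_RInt_gen_scal _ (INR m) _ Hl) HD)].
  apply filter_forall; intros _ x _.
  unfold minus, plus, opp, scal; simpl; unfold mult; simpl; ring.
Qed.

Lemma is_RInt_gen_pow_gauss (m : nat) :
  is_RInt_line (fun x => x ^ m * gauss x) (gauss_moment m * sqrt (2 * PI)).
Proof.
  cut (is_RInt_line (fun x => x ^ m * gauss x) (gauss_moment m * sqrt (2 * PI)) /\
       is_RInt_line (fun x => x ^ S m * gauss x) (gauss_moment (S m) * sqrt (2 * PI)));
    [tauto|].
  assert (H0 : is_RInt_line (fun x => x ^ 0 * gauss x) (gauss_moment 0 * sqrt (2 * PI))).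
  { eapply is_RInt_gen_ext; [|rewrite Rmult_1_l; exact is_RInt_gen_gauss].
    apply filter_forall; intros; simpl; ring. }
  induction m as [|m [IHm IHSm]]; split; try assumption.
  - replace (gauss_moment 1 * sqrt (2 * PI)) with (INR 0 * (gauss_moment 0 * sqrt (2 * PI)))
      by (simpl; ring).
    exact (is_RInt_gen_pow_gauss_S 0 _ H0).
  - change (gauss_moment (S (S m))) with (INR (S m) * gauss_moment m); rewrite Rmult_assoc.
    exact (is_RInt_gen_pow_gauss_S (S m) _ IHm).
Qed.

Lemma is_RInt_gen_std_normal_moment (m : nat) :
  is_RInt_line (fun x => x ^ m * std_normal_density x) (gauss_moment m).
Proof.
  assert (Hs : 0 < sqrt (2 * PI)) by (apply sqrt_lt_R0; pose proof PI_RGT_0; lra).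
  replace (gauss_moment m) with (scal (/ sqrt (2 * PI)) (gauss_moment m * sqrt (2 * PI)))
    by (unfold scal; simpl; unfold mult; simpl; field; lra).
  eapply is_RInt_gen_ext; [|exact (is_RInt_gen_scal _ _ _ (is_RInt_gen_pow_gauss m))].
  apply filter_forall; intros _ x _.
  change (@eq R (/ sqrt (2 * PI) * (x ^ m * gauss x)) (x ^ m * std_normal_density x)).
  unfold std_normal_density, gauss; field; lra.
Qed.

Theorem proposition4p11 (b a : nat -> R) :
  (* g = sum_n b_n z^n is entire *)
  CV_radius b = p_infty ->
  (* non-negative Taylor coefficients *)
  (forall n, 0 <= b n) ->
  (* g is non-constant *)
  (exists n, (1 <= n)%nat /\ b n <> 0) ->
  (* g has finite order *)
  finite_order b ->
  (* f = e^g = sum_n a_n z^n *)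
  (forall x : R, is_pseries a x (exp (PSeries b x))) ->
  forall m : nat, (1 <= m)%nat ->
    exists EZm : R,
      is_RInt_gen (fun x => x ^ m * std_normal_density x)
        (Rbar_locally m_infty) (Rbar_locally p_infty) EZm /\
      is_lim (fun t => knorm_moment a t m) p_infty EZm.
Proof.
  intros b_entire b_nonneg b_nonconst b_order f_exp_g m _.
  assert (a_entire : CV_radius a = p_infty)
    by (apply CV_radius_infinite; intro x; eexists; apply f_exp_g).
  assert (Hab : forall t, PSeries a t = exp (PSeries b t))
    by (intro t; apply is_pseries_unique, f_exp_g).
  exists (gauss_moment m); split; [apply is_RInt_gen_std_normal_moment|].
  apply (is_lim_ext_pos (fun t => central_moment a b m t / sqrt (theta_series b 2 t) ^ m)).
  - apply (isobaric_lim (theta_series b)).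
    + intros t Ht; apply theta2_pos; assumption.
    + apply theta_ratio_vanishes; assumption.
    + apply central_moment_isobaric; assumption.
  - intros t Ht; symmetry; apply knorm_moment_exp; assumption.
Qed.
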